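(* For every positive integer $n$: $${}_3F_2\left[\begin{matrix}-n,\ \frac{n+1}2,\ \frac n2\\ \frac13,\ \frac23\end{matrix};1\right]=\frac{1+2(-8)^n}{3\cdot4^n},\qquad {}_3F_2\left[\begin{matrix}-n,\ \frac{n+1}2,\ \frac{n+2}2\\ \frac23,\ \frac43\end{matrix};1\right]=\frac{4(-8)^n-1}{3(3n+1)4^n},$$ $${}_3F_2\left[\begin{matrix}-n,\ \frac{n+3}2,\ \frac{n+2}2\\ \frac43,\ \frac53\end{matrix};1\right]=\frac{2(1-(-8)^{n+1})}{9(n+1)(3n+2)4^n},\qquad {}_3F_2\left[\begin{matrix}-n,\ \frac{n+1}2,\ \frac{n+2}2\\ \frac13,\ \frac23\end{matrix};1\right]=\frac{1+2(9n+4)(-8)^n}{9\cdot4^n},$$ $${}_3F_2\left[\begin{matrix}-n,\ \frac{n+3}2,\ \frac{n+2}2\\ \frac23,\ \frac43\end{matrix};1\right]=\frac{4(9n+7)(-8)^n-1}{27(n+1)4^n},\qquad {}_3F_2\left[\begin{matrix}-n,\ \frac{n+4}2,\ \frac{n+3}2\\ \frac43,\ \frac53\end{matrix};1\right]=\frac{2(1-(9n+10)(-8)^{n+1})}{81(n+1)(n+2)4^n}.$$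
   Context: ${}_3F_2\left[\begin{matrix}a_1,a_2,a_3\\ b_1,b_2\end{matrix};x\right]=\sum_{k\ge0}\frac{(a_1)_k(a_2)_k(a_3)_k}{(b_1)_k(b_2)_k}\frac{x^k}{k!}$, $(x)_k=x(x+1)\cdots(x+k-1)$, $(x)_0=1$; with $a_1=-n$ the series is a finite sum. *)

From mathcomp Require Import all_boot all_order all_algebra.
Set Implicit Arguments. Unset Strict Implicit. Unset Printing Implicit Defensive.
Import Order.TTheory GRing.Theory Num.Theory.
Local Open Scope ring_scope.

Definition poch {R : numFieldType} (x : R) (k : nat) : R :=
  \prod_(i < k) (x + i%:R).

(* Terminating 3F2 with a1 = -n: the series sum_{k>=0} ... has all terms
   with k > n equal to 0 (since (-n)_k = 0), so it equals the finite sum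
   over k = 0..n. *)
Definition F32_term {R : numFieldType} (a1 a2 a3 b1 b2 x : R) (k : nat) : R :=
  poch a1 k * poch a2 k * poch a3 k / (poch b1 k * poch b2 k) * x ^+ k / (k`!)%:R.

Definition F32_terminating {R : numFieldType} (n : nat) (a2 a3 b1 b2 x : R) : R :=
  \sum_(k < n.+1) F32_term (- n%:R) a2 a3 b1 b2 x k.

From mathcomp Require Import all_boot all_order all_algebra.
From mathcomp Require Import ring zify.
Import Order.TTheory GRing.Theory Num.Theory.
Local Open Scope ring_scope.

(* By the duplication and triplication formulas for Pochhammer symbols, the
   k-th term of each of the six series is (-27/4)^k times a binomial
   coefficient C(m + 2k, 3k + j), or a combination of two such, for some m
   close to n and some j in {0, 1, 2}.  Hence every left-hand side is a linear
   combination of the sums bsum j m = \sum_k (-27/4)^k C(m + 2k, 3k + j).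
   Pascal's rule applied three times gives the recurrence
     bsum j (m+3) - 3 bsum j (m+2) + 3 bsum j (m+1) - bsum j m = -27/4 bsum j (m+2),
   whose characteristic polynomial (x - 1)^3 + 27/4 x^2 = (x - 1/4) (x + 2)^2
   forces bsum j m = A / 4^m + (B + C m) (-2)^m, with A, B, C read off from
   the first three values. *)

Lemma fact_natr_neq0 {R : numFieldType} n : (n`!%:R : R) != 0.
Proof. by rewrite pnatr_eq0 -lt0n fact_gt0. Qed.

Ltac natr_neq0 :=
  rewrite ?mulf_neq0 ?invr_eq0 ?fact_natr_neq0 ?expf_neq0;
  do ?[rewrite -natrM | rewrite -natrD | rewrite natr1 | rewrite nat1r];
  rewrite ?pnatr_eq0 ?addn_eq0 /= ?andbF.

Lemma rec3_eq (T : Type) (phi : T -> T -> T -> T) (f g : nat -> T) :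
  (forall m, f m.+3 = phi (f m.+2) (f m.+1) (f m)) ->
  (forall m, g m.+3 = phi (g m.+2) (g m.+1) (g m)) ->
  f 0%N = g 0%N -> f 1%N = g 1%N -> f 2%N = g 2%N -> f =1 g.
Proof.
move=> recf recg fg0 fg1 fg2.
suff fg m : [/\ f m = g m, f m.+1 = g m.+1 & f m.+2 = g m.+2].
  by move=> m; case: (fg m).
elim: m => [|m [e0 e1 e2]]; first by [].
by split=> //; rewrite recf recg e0 e1 e2.
Qed.

Section TerminatingF32.
Variable R : numFieldType.
Implicit Types (a b c d e x : R) (i j k m n M N J : nat).

Lemma poch0 x : poch x 0 = 1.
Proof. by rewrite /poch big_ord0. Qed.

Lemma pochS x k : poch x k.+1 = poch x k * (x + k%:R).
Proof. by rewrite /poch big_ord_recr. Qed.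

Lemma poch_natr m k : poch (m.+1%:R : R) k = (m + k)`!%:R / m`!%:R.
Proof.
elim: k => [|k IHk]; first by rewrite poch0 addn0 divff ?fact_natr_neq0.
by rewrite pochS IHk addnS factS natrM -natrD addSn mulrC mulrA.
Qed.

Lemma poch1 k : poch 1 k = k`!%:R :> R.
Proof. by have := poch_natr 0 k; rewrite add0n fact0 divr1. Qed.

Lemma poch_oppn n k : poch (- n%:R : R) k = (-1) ^+ k * (n ^_ k)%:R.
Proof.
elim: k => [|k IHk]; first by rewrite poch0 expr0 mulr1.
rewrite pochS IHk ffactnSr natrM exprS.
have [kn | nk] := leqP k n; first by rewrite natrB //; ring.
by rewrite ffact_small // mulr0n !(mulr0, mul0r).
Qed.

Lemma poch_halves x k :
  poch (x / 2) k * poch ((x + 1) / 2) k = poch x (2 * k) / 4 ^+ k.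
Proof.
elim: k => [|k IHk]; first by rewrite !poch0 mulr1 expr0 divr1.
rewrite mulnSr addn2 !pochS mulrACA IHk -[(2 * k).+1%:R]natr1 natrM exprS.
by field; natr_neq0.
Qed.

Lemma poch_thirds x k :
  poch (x / 3) k * poch ((x + 1) / 3) k * poch ((x + 2) / 3) k
  = poch x (3 * k) / 27 ^+ k.
Proof.
elim: k => [|k IHk]; first by rewrite !poch0 !mulr1 expr0 divr1.
rewrite mulnSr addn3 !pochS.
transitivity (poch (x / 3) k * poch ((x + 1) / 3) k * poch ((x + 2) / 3) k
  * ((x / 3 + k%:R) * ((x + 1) / 3 + k%:R) * ((x + 2) / 3 + k%:R))).
  by ring.
rewrite IHk exprS -[(3 * k).+2%:R]natr1 -[(3 * k).+1%:R]natr1 natrM.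
by field; natr_neq0.
Qed.

Lemma poch_halves_natr M a b k : 2 * a = (M + 1)%:R -> 2 * b = (M + 2)%:R ->
  poch a k * poch b k = (M + 2 * k)`!%:R / (M`!%:R * 4 ^+ k).
Proof.
move=> ha hb.
have -> : a = M.+1%:R / 2 by rewrite -addn1 -ha; field.
have -> : b = (M.+1%:R + 1) / 2 by rewrite natr1 -addn2 -hb; field.
by rewrite poch_halves poch_natr -mulrA -invfM.
Qed.

Lemma poch_13_23 k :
  poch (1 / 3) k * poch (2 / 3) k = (3 * k)`!%:R / (27 ^+ k * k`!%:R) :> R.
Proof.
have := poch_thirds 1 k; rewrite (_ : (1 + 2) / 3 = 1); last by field.
rewrite !poch1 => h; apply: (mulIf (fact_natr_neq0 k)); rewrite h.
by field; natr_neq0.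
Qed.

Lemma poch_23_43 k :
  poch (2 / 3) k * poch (4 / 3) k = (3 * k + 1)`!%:R / (27 ^+ k * k`!%:R) :> R.
Proof.
have := poch_thirds 2 k; rewrite (_ : (2 + 1) / 3 = 1); last by field.
rewrite (_ : (2 + 2) / 3 = 4 / 3); last by field.
rewrite poch1 mulrAC (poch_natr 1) addnC divr1 => h.
apply: (mulIf (fact_natr_neq0 k)); rewrite h.
by field; natr_neq0.
Qed.

Lemma poch_43_53 k :
  poch (4 / 3) k * poch (5 / 3) k = (3 * k + 2)`!%:R / (2 * 27 ^+ k * k`!%:R) :> R.
Proof.
have := poch_thirds 3 k; rewrite (_ : (3 + 1) / 3 = 4 / 3); last by field.
rewrite (_ : (3 + 2) / 3 = 5 / 3); last by field.
rewrite divff ?pnatr_eq0 // poch1 -mulrA mulrC (poch_natr 2) addnC -[2`!%:R]/2 => h.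
apply: (mulIf (fact_natr_neq0 k)); rewrite h.
by field; natr_neq0.
Qed.

Lemma natr_bin_fact n m : (m <= n)%N ->
  'C(n, m)%:R = n`!%:R / (m`!%:R * (n - m)`!%:R) :> R.
Proof.
by move=> mn; rewrite -(bin_fact mn) !natrM mulfK // mulf_neq0 ?fact_natr_neq0.
Qed.

Lemma natr_binS n m : 'C(n, m.+1)%:R = (n - m)%:R * 'C(n, m)%:R / m.+1%:R :> R.
Proof.
apply: (@mulfI _ m.+1%:R); first by rewrite pnatr_eq0.
by rewrite -[in LHS]natrM mul_bin_left natrM; field; natr_neq0.
Qed.

Local Notation rho := (- (27 / 4) : R).

Lemma exprrho k : rho ^+ k = (-1) ^+ k * 27 ^+ k / 4 ^+ k.
Proof. by rewrite [LHS]exprNn exprMn exprVn mulrA. Qed.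

Lemma F32_term0 a b c d e x : F32_term a b c d e x 0 = 1.
Proof. by rewrite /F32_term !poch0 expr0 fact0 !(mul1r, mulr1, invr1). Qed.

Lemma F32_termC a b c d e x k : F32_term a b c d e x k = F32_term a c b d e x k.
Proof. by rewrite /F32_term [poch a k * _ * _]mulrAC. Qed.

Lemma F32_term_oppn n a b c d x k :
  F32_term (- n%:R) a b c d x k
  = (- x) ^+ k * 'C(n, k)%:R * (poch a k * poch b k) / (poch c k * poch d k).
Proof.
rewrite /F32_term poch_oppn -bin_ffact natrM [(- x) ^+ k]exprNn.
set Q := (poch c k * poch d k)^-1.
by field; natr_neq0.
Qed.

Lemma F32_term_13_23 n k : (k <= n)%N ->
  F32_term (- n%:R) ((n%:R + 1) / 2) ((n%:R + 2) / 2) (1 / 3) (2 / 3) 1 k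
  = rho ^+ k * 'C(n + 2 * k, 3 * k)%:R.
Proof.
move=> kn; have k3n : (3 * k <= n + 2 * k)%N by lia.
rewrite F32_term_oppn (poch_halves_natr n); [|by rewrite natrD; field..].
rewrite poch_13_23 !natr_bin_fact // (_ : n + 2 * k - 3 * k = n - k)%N; last by lia.
by rewrite exprrho; field; natr_neq0.
Qed.

Lemma F32_term_23_43 n k : (k <= n)%N ->
  (3 * n%:R + 1)
    * F32_term (- n%:R) ((n%:R + 1) / 2) ((n%:R + 2) / 2) (2 / 3) (4 / 3) 1 k
  = rho ^+ k * ('C(n + 2 * k, 3 * k)%:R + 3 * 'C(n + 2 * k, 3 * k + 1)%:R).
Proof.
move=> kn; have k3n : (3 * k <= n + 2 * k)%N by lia.
rewrite F32_term_oppn (poch_halves_natr n); [|by rewrite natrD; field..].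
rewrite poch_23_43 addn1 natr_binS !natr_bin_fact //.
rewrite (_ : n + 2 * k - 3 * k = n - k)%N; last by lia.
by rewrite factS exprrho natrB // natrM; field; natr_neq0.
Qed.

Lemma F32_term_43_53 n k : (k <= n)%N ->
  (n%:R + 1) * (3 * n%:R + 2) / 2
    * F32_term (- n%:R) ((n%:R + 3) / 2) ((n%:R + 2) / 2) (4 / 3) (5 / 3) 1 k
  = rho ^+ k * ('C(n.+1 + 2 * k, 3 * k + 1)%:R + 3 * 'C(n.+1 + 2 * k, 3 * k + 2)%:R).
Proof.
move=> kn; have k3n : (3 * k + 1 <= n.+1 + 2 * k)%N by lia.
rewrite F32_termC F32_term_oppn (poch_halves_natr n.+1); [|by rewrite natrD; field..].
rewrite poch_43_53 [(3 * k + 2)%N]addnS natr_binS !natr_bin_fact //.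
rewrite (_ : n.+1 + 2 * k - (3 * k + 1) = n - k)%N; last by lia.
rewrite [n.+1`!]factS [(3 * k + 1).+1`!]factS exprrho natrB // !natrM.
by rewrite -[n.+1%:R]natr1 -[(3 * k + 1).+1%:R]natr1 natrD; field; natr_neq0.
Qed.

Lemma F32_term_23_43_succ n k : (k <= n)%N ->
  (n%:R + 1)
    * F32_term (- n%:R) ((n%:R + 3) / 2) ((n%:R + 2) / 2) (2 / 3) (4 / 3) 1 k
  = rho ^+ k * 'C(n.+1 + 2 * k, 3 * k + 1)%:R.
Proof.
move=> kn; have k3n : (3 * k + 1 <= n.+1 + 2 * k)%N by lia.
rewrite F32_termC F32_term_oppn (poch_halves_natr n.+1); [|by rewrite natrD; field..].
rewrite poch_23_43 !natr_bin_fact //.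
rewrite (_ : n.+1 + 2 * k - (3 * k + 1) = n - k)%N; last by lia.
by rewrite factS natrM -[n.+1%:R]natr1 exprrho; field; natr_neq0.
Qed.

Lemma F32_term_43_53_succ n k : (k <= n)%N ->
  (n%:R + 1) * (n%:R + 2) / 2
    * F32_term (- n%:R) ((n%:R + 4) / 2) ((n%:R + 3) / 2) (4 / 3) (5 / 3) 1 k
  = rho ^+ k * 'C(n.+2 + 2 * k, 3 * k + 2)%:R.
Proof.
move=> kn; have k3n : (3 * k + 2 <= n.+2 + 2 * k)%N by lia.
rewrite F32_termC F32_term_oppn (poch_halves_natr n.+2); [|by rewrite natrD; field..].
rewrite poch_43_53 !natr_bin_fact //.
rewrite (_ : n.+2 + 2 * k - (3 * k + 2) = n - k)%N; last by lia.
rewrite [n.+2`!]factS [n.+1`!]factS exprrho !natrM -[n.+2%:R]natr1 -[n.+1%:R]natr1.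
by field; natr_neq0.
Qed.

Lemma F32_term_13_23_pred m i : (i <= m)%N ->
  F32_term (- m.+1%:R) ((m.+1%:R + 1) / 2) (m.+1%:R / 2) (1 / 3) (2 / 3) 1 i.+1
  = rho ^+ i.+1
    * ('C(m + 2 * i.+1, 3 * i.+1)%:R + 'C(m.+2 + 2 * i, 3 * i + 2)%:R / 3).
Proof.
move=> im; have i3m : (3 * i + 2 <= m.+2 + 2 * i)%N by lia.
rewrite F32_termC F32_term_oppn (poch_halves_natr m); [|by rewrite natrD; field..].
rewrite poch_13_23 (_ : m + 2 * i.+1 = m.+2 + 2 * i)%N; last by lia.
rewrite (_ : 3 * i.+1 = (3 * i + 2).+1)%N; last by lia.
rewrite natr_bin_fact // subSS natr_binS natr_bin_fact //.
rewrite (_ : m.+2 + 2 * i - (3 * i + 2) = m - i)%N; last by lia.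
rewrite [m.+1`!]factS [i.+1`!]factS [(3 * i + 2).+1`!]factS exprrho natrB // !natrM.
rewrite -[m.+1%:R]natr1 -[i.+1%:R]natr1 -[(3 * i + 2).+1%:R]natr1 natrD.
by field; natr_neq0.
Qed.

Definition bsum j m : R := \sum_(k < m.+1) rho ^+ k * 'C(m + 2 * k, 3 * k + j)%:R.

Lemma sum_ord_vanish (F : nat -> R) {K L : nat} : (K <= L)%N ->
  (forall k, (K <= k)%N -> F k = 0) -> \sum_(k < L) F k = \sum_(k < K) F k.
Proof.
move=> KL F0; rewrite (big_ord_widen L F KL) [RHS]big_mkcond.
by apply: eq_bigr => k _; case: ltnP => // /F0.
Qed.

Lemma bsum_widen j m K : (m < K + j)%N ->
  \sum_(k < K) rho ^+ k * 'C(m + 2 * k, 3 * k + j)%:R = bsum j m.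
Proof.
move=> mK; pose F k := rho ^+ k * 'C(m + 2 * k, 3 * k + j)%:R.
have F0 k : (m < k + j)%N -> F k = 0.
  by move=> ?; rewrite /F bin_small ?mulr0 //; lia.
rewrite /bsum -(sum_ord_vanish F (leq_maxl K m.+1)) => [|k Kk]; last by apply: F0; lia.
by rewrite (sum_ord_vanish F (leq_maxr K m.+1)) // => k mk; apply: F0; lia.
Qed.

Lemma bin_diff3 N J :
  'C(N.+3, J.+3)%:R - 3 * 'C(N.+2, J.+3)%:R + 3 * 'C(N.+1, J.+3)%:R - 'C(N, J.+3)%:R
  = 'C(N, J)%:R :> R.
Proof. by rewrite !binS !natrD; ring. Qed.

Lemma bin_diff3_small N j : (j <= 2)%N ->
  'C(N.+3, j)%:R - 3 * 'C(N.+2, j)%:R + 3 * 'C(N.+1, j)%:R - 'C(N, j)%:R = 0 :> R.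
Proof. by case: j => [|[|[|j]]] // _; rewrite ?binS ?bin0 ?natrD; ring. Qed.

Lemma bsum_diff3 j m : (j <= 2)%N ->
  bsum j m.+3 - 3 * bsum j m.+2 + 3 * bsum j m.+1 - bsum j m = rho * bsum j m.+2.
Proof.
move=> j2; pose F m' k := rho ^+ k * 'C(m' + 2 * k, 3 * k + j)%:R.
have widen m' : (m' <= m.+3)%N -> bsum j m' = \sum_(k < m.+4) F m' k.
  by move=> ?; rewrite bsum_widen //; lia.
have diff3F k : F m.+3 k - 3 * F m.+2 k + 3 * F m.+1 k - F m k
                = if k is i.+1 then rho * F m.+2 i else 0.
  case: k => [|i].
    by rewrite /F !muln0 !addn0 !add0n expr0 !mul1r bin_diff3_small.
  rewrite /F (_ : m.+3 + 2 * i.+1 = (m.+2 + 2 * i).+3)%N; last by lia.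
  rewrite (_ : m.+2 + 2 * i.+1 = (m.+2 + 2 * i).+2)%N; last by lia.
  rewrite (_ : m.+1 + 2 * i.+1 = (m.+2 + 2 * i).+1)%N; last by lia.
  rewrite (_ : m + 2 * i.+1 = m.+2 + 2 * i)%N; last by lia.
  rewrite (_ : 3 * i.+1 + j = (3 * i + j).+3)%N; last by lia.
  by rewrite -(bin_diff3 (m.+2 + 2 * i) (3 * i + j)) exprS; ring.
rewrite [bsum j m.+3]widen // [in LHS](widen m.+2) // (widen m.+1 (leqW (leqnSn _))).
rewrite (widen m (leqW (leqW (leqnSn _)))).
rewrite !mulr_sumr -sumrB -big_split -sumrB big_ord_recl diff3F add0r.
by apply: eq_bigr => i _; rewrite diff3F.
Qed.

Lemma bsum_rec j m : (j <= 2)%N ->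
  bsum j m.+3 = (3 + rho) * bsum j m.+2 - 3 * bsum j m.+1 + bsum j m.
Proof. by move=> j2; rewrite mulrDl -(bsum_diff3 j m j2); ring. Qed.

Definition geo_seq (A B C : R) m : R := A / 4 ^+ m + (B + C * m%:R) * (-2) ^+ m.

Lemma geo_seq_rec A B C m :
  geo_seq A B C m.+3
  = (3 + rho) * geo_seq A B C m.+2 - 3 * geo_seq A B C m.+1 + geo_seq A B C m.
Proof. by rewrite /geo_seq !exprS; field; natr_neq0. Qed.

Lemma bsum_geo_seq j A B C : (j <= 2)%N ->
  bsum j 0 = geo_seq A B C 0 -> bsum j 1 = geo_seq A B C 1 ->
  bsum j 2 = geo_seq A B C 2 -> bsum j =1 geo_seq A B C.
Proof.
move=> j2; apply: (@rec3_eq _ (fun x y z => (3 + rho) * x - 3 * y + z)) => m.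
  exact: bsum_rec.
exact: geo_seq_rec.
Qed.

Lemma bsum0E : bsum 0 =1 geo_seq (1 / 9) (8 / 9) 2.
Proof.
apply: bsum_geo_seq => //.
all: by rewrite /bsum /geo_seq !big_ord_recr big_ord0 /= /binomial /=; field.
Qed.

Lemma bsum1E : bsum 1 =1 geo_seq (- 4 / 27) (4 / 27) (- 2 / 3).
Proof.
apply: bsum_geo_seq => //.
all: by rewrite /bsum /geo_seq !big_ord_recr big_ord0 /= /binomial /=; field.
Qed.

Lemma bsum2E : bsum 2 =1 geo_seq (16 / 81) (- 16 / 81) (2 / 9).
Proof.
apply: bsum_geo_seq => //.
all: by rewrite /bsum /geo_seq !big_ord_recr big_ord0 /= /binomial /=; field.
Qed.

Lemma F32_13_23E n :
  F32_terminating n ((n%:R + 1) / 2) ((n%:R + 2) / 2) (1 / 3) (2 / 3) 1 = bsum 0 n.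
Proof. by apply: eq_bigr => -[k /= kn] _; rewrite addn0 F32_term_13_23. Qed.

Lemma F32_23_43E n :
  (3 * n%:R + 1)
    * F32_terminating n ((n%:R + 1) / 2) ((n%:R + 2) / 2) (2 / 3) (4 / 3) 1
  = bsum 0 n + 3 * bsum 1 n.
Proof.
rewrite /F32_terminating /bsum !mulr_sumr -big_split.
by apply: eq_bigr => -[k /= kn] _; rewrite F32_term_23_43 // addn0 mulrDr mulrCA.
Qed.

Lemma F32_43_53E n :
  (n%:R + 1) * (3 * n%:R + 2) / 2
    * F32_terminating n ((n%:R + 3) / 2) ((n%:R + 2) / 2) (4 / 3) (5 / 3) 1
  = bsum 1 n.+1 + 3 * bsum 2 n.+1.
Proof.
rewrite -(bsum_widen 1 n.+1 n.+1); last by lia.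
rewrite -(bsum_widen 2 n.+1 n.+1); last by lia.
rewrite /F32_terminating !mulr_sumr -big_split.
by apply: eq_bigr => -[k /= kn] _; rewrite F32_term_43_53 // mulrDr mulrCA.
Qed.

Lemma F32_23_43_succE n :
  (n%:R + 1) * F32_terminating n ((n%:R + 3) / 2) ((n%:R + 2) / 2) (2 / 3) (4 / 3) 1
  = bsum 1 n.+1.
Proof.
rewrite -(bsum_widen 1 n.+1 n.+1); last by lia.
rewrite /F32_terminating mulr_sumr.
by apply: eq_bigr => -[k /= kn] _; rewrite F32_term_23_43_succ.
Qed.

Lemma F32_43_53_succE n :
  (n%:R + 1) * (n%:R + 2) / 2
    * F32_terminating n ((n%:R + 4) / 2) ((n%:R + 3) / 2) (4 / 3) (5 / 3) 1
  = bsum 2 n.+2.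
Proof.
rewrite -(bsum_widen 2 n.+2 n.+1); last by lia.
rewrite /F32_terminating mulr_sumr.
by apply: eq_bigr => -[k /= kn] _; rewrite F32_term_43_53_succ.
Qed.

Lemma F32_13_23_predE m :
  F32_terminating m.+1 ((m.+1%:R + 1) / 2) (m.+1%:R / 2) (1 / 3) (2 / 3) 1
  = bsum 0 m + rho / 3 * bsum 2 m.+2.
Proof.
rewrite -(bsum_widen 0 m m.+2); last by lia.
rewrite -(bsum_widen 2 m.+2 m.+1); last by lia.
rewrite /F32_terminating ![\sum_(k < m.+2) _]big_ord_recl F32_term0 /=.
rewrite muln0 addn0 bin0 expr0 -addrA; congr (_ + _); first by rewrite mulr1.
rewrite mulr_sumr -big_split; apply: eq_bigr => -[i im] _ /=.
by rewrite F32_term_13_23_pred // addn0 exprS; ring.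
Qed.

End TerminatingF32.

Theorem proposition5 (R : numFieldType) (n : nat) (hn : (0 < n)%N) :
  let N : R := n%:R in
  (F32_terminating n ((N + 1) / 2) (N / 2) (1 / 3) (2 / 3) 1
        = (1 + 2 * (-8) ^+ n) / (3 * 4 ^+ n) /\
      F32_terminating n ((N + 1) / 2) ((N + 2) / 2) (2 / 3) (4 / 3) 1
        = (4 * (-8) ^+ n - 1) / (3 * (3 * N + 1) * 4 ^+ n) /\
      F32_terminating n ((N + 3) / 2) ((N + 2) / 2) (4 / 3) (5 / 3) 1
        = 2 * (1 - (-8) ^+ n.+1) / (9 * (N + 1) * (3 * N + 2) * 4 ^+ n) /\
      F32_terminating n ((N + 1) / 2) ((N + 2) / 2) (1 / 3) (2 / 3) 1
        = (1 + 2 * (9 * N + 4) * (-8) ^+ n) / (9 * 4 ^+ n) /\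
      F32_terminating n ((N + 3) / 2) ((N + 2) / 2) (2 / 3) (4 / 3) 1
        = (4 * (9 * N + 7) * (-8) ^+ n - 1) / (27 * (N + 1) * 4 ^+ n) /\
      F32_terminating n ((N + 4) / 2) ((N + 3) / 2) (4 / 3) (5 / 3) 1
        = 2 * (1 - (9 * N + 10) * (-8) ^+ n.+1) / (81 * (N + 1) * (N + 2) * 4 ^+ n)).
Proof.
rewrite /=; have e8 j : (-8 : R) ^+ j = (-2) ^+ j * 4 ^+ j.
  by rewrite -exprMn; congr (_ ^+ _); ring.
split.
  case: n hn => // m _.
  by rewrite F32_13_23_predE bsum0E bsum2E /geo_seq !e8 !exprS; field; natr_neq0.
split.
  apply: (@mulfI _ (3 * n%:R + 1)); first by natr_neq0.
  by rewrite F32_23_43E bsum0E bsum1E /geo_seq !e8; field; natr_neq0.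
split.
  apply: (@mulfI _ ((n%:R + 1) * (3 * n%:R + 2) / 2)); first by natr_neq0.
  by rewrite F32_43_53E bsum1E bsum2E /geo_seq !e8 !exprS; field; natr_neq0.
split.
  by rewrite F32_13_23E bsum0E /geo_seq e8; field; natr_neq0.
split.
  apply: (@mulfI _ (n%:R + 1)); first by natr_neq0.
  by rewrite F32_23_43_succE bsum1E /geo_seq !e8 !exprS; field; natr_neq0.
apply: (@mulfI _ ((n%:R + 1) * (n%:R + 2) / 2)); first by natr_neq0.
by rewrite F32_43_53_succE bsum2E /geo_seq !e8 !exprS; field; natr_neq0.
Qed.
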